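(* Let $R$ be a commutative ring and $\mathscr{M}$ a $\mathcal{B}$-diagram of $R$-modules such that $\mathrm{im}(\mathscr{M}(\mho_\sigma))\subseteq\ker(\mathscr{M}(\Omega_\sigma))$ for every vertex $\sigma$. If $0\ne m\in\mathscr{M}(\emptyset)$, then there exists a ray $(\sigma^i)$ in $\mathcal{B}$ such that exactly one of the following holds: (1) there exists $j\in\mathbb{N}$ with $m\in\widetilde{\mu}_{\le j}\ker(\mathscr{M}(\Omega_{\sigma^j}))\setminus\widetilde{\mu}_{\le j}\,\mathrm{im}(\mathscr{M}(\mho_{\sigma^j}))$; (2) for each $j\in\mathbb{N}$, $m\in\widetilde{\mu}_{\le j}M[j]\setminus\widetilde{\mu}_{\le j}0$, and so $m\in\bigcap_{i\in\mathbb{N}}\widetilde{\mu}_{\le i}M[i]\setminus\bigcup_{i\in\mathbb{N}}\widetilde{\mu}_{\le i}0$.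
   Context: The quiver $\mathcal{B}$: vertices are finite $0/1$-sequences including the empty sequence $\emptyset$; for each vertex $\sigma$ there are arrows $\Omega_\sigma\colon\sigma\to\sigma1$ and $\mho_\sigma\colon\sigma0\to\sigma$ ($\sigma1,\sigma0$ = $\sigma$ with $1$, resp. $0$, appended). A $\mathcal{B}$-diagram assigns $R$-modules to vertices and $R$-linear maps to arrows. A ray is a sequence $(\sigma^i)_{i\ge0}$ with $\sigma^0=\emptyset$ and $\sigma^i$ equal to $\sigma^{i-1}$ with one symbol appended; $\sigma_i=+$ if that symbol is $1$, $-$ if $0$. Given a ray, $M[i]=\mathscr{M}(\sigma^i)$, and $\mu_i$ ($i\ge1$) is the image of the arrow between $\sigma^{i-1}$ and $\sigma^i$: $\mu_i\colon M[i]\to M[i-1]$ if $\sigma_i=-$, $\mu_i\colon M[i-1]\to M[i]$ if $\sigma_i=+$. $\widetilde{\mu}_i\subseteq M[i]\oplus M[i-1]$ is $\{(x,\mu_i(x))\}$ if $\sigma_i=-$ and $\{(\mu_i(y),y)\}$ if $\sigma_i=+$. For $S\subseteq M[n]$, $\widetilde{\mu}_{\le n}S$ is the set of $m_0\in M[0]$ for which there are $m_i\in M[i]$ ($1\le i\le n$) with $m_n\in S$ and $(m_i,m_{i-1})\in\widetilde{\mu}_i$ for $1\le i\le n$; $\widetilde{\mu}_{\le0}S=S$; $\widetilde{\mu}_{\le i}0=\widetilde{\mu}_{\le i}\{0\}$. *)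

From HB Require Import structures.
From mathcomp Require Import all_boot all_algebra.
Unset Printing Implicit Defensive.
Import GRing.Theory.
Local Open Scope ring_scope.

(* Vertices of the quiver B are finite 0/1-sequences, encoded as [seq bool]
   (true = 1, false = 0).  sigma1 = rcons sigma true, sigma0 = rcons sigma false. *)

Section Ray.
Variables (R : comPzRingType) (M : seq bool -> lmodType R).
Variable Omega : forall s, {linear M s -> M (rcons s true)}.
Variable Mho : forall s, {linear M (rcons s false) -> M s}.

(* A ray is determined by its sequence of appended symbols d : nat -> bool;
   sigma^0 = [::] and sigma^(i+1) = sigma^i with symbol d i appended. *)
Fixpoint ray_vertex (d : nat -> bool) (i : nat) : seq bool :=
  if i is i'.+1 then rcons (ray_vertex d i') (d i') else [::].

(* The relation mu~ between M(rcons s b) and M(s):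
   b = false (sign -):  {(x, Mho_s x)};  b = true (sign +): {(Omega_s y, y)}. *)
Definition mu_tilde (s : seq bool) (b : bool) : M (rcons s b) -> M s -> Prop :=
  match b return M (rcons s b) -> M s -> Prop with
  | true => fun x y => x = Omega s y
  | false => fun x y => y = Mho s x
  end.

Fixpoint chain (d : nat -> bool) (n : nat) : M (ray_vertex d n) -> M [::] -> Prop :=
  match n return M (ray_vertex d n) -> M [::] -> Prop with
  | 0 => fun x m0 => x = m0
  | n'.+1 => fun x m0 =>
      exists y : M (ray_vertex d n'), @mu_tilde (ray_vertex d n') (d n') x y /\ @chain d n' y m0
  end.

Definition mu_le (d : nat -> bool) (n : nat) (S : M (ray_vertex d n) -> Prop)
  (m0 : M [::]) : Prop :=
  exists x, S x /\ chain d n x m0.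

Definition ker_Omega (s : seq bool) : M s -> Prop := fun x => Omega s x = 0.
Definition im_Mho (s : seq bool) : M s -> Prop :=
  fun x => exists y : M (rcons s false), x = Mho s y.
Definition whole (s : seq bool) : M s -> Prop := fun _ => True.
Definition zero_set (s : seq bool) : M s -> Prop := fun x => x = 0.

End Ray.

Arguments ray_vertex d i : clear implicits.
Arguments mu_tilde {R M} Omega Mho s b.
Arguments chain {R M} Omega Mho d n.
Arguments mu_le {R M} Omega Mho d n S m0.
Arguments ker_Omega {R M} Omega s.
Arguments im_Mho {R M} Mho s.
Arguments whole {R} M s.
Arguments zero_set {R} M s.

(* Choose the ray greedily: at each vertex step back along [Mho] if [m]
   lifts into the image of [Mho] there, and forward along [Omega] otherwise.
   If at some vertex [m] lifts into the kernel of [Omega] but not into the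
   image of [Mho], the next step is forward and [m] lifts to 0 there, so (1)
   holds and (2) fails.  Otherwise, by induction, [m] lifts to every [M[j]]
   but never to 0: a forward step creates a zero lift only from a lift in the
   kernel of [Omega], and a backward step from a lift in the image of [Mho]
   keeps a lift, while a zero lift would map by [Mho] to a zero lift before. *)

From HB Require Import structures.
From mathcomp Require Import all_boot all_algebra.
From Stdlib Require Import Classical ClassicalEpsilon.
Import GRing.Theory.
Local Open Scope ring_scope.

Section GreedyRay.
Variables (R : comPzRingType) (M : seq bool -> lmodType R).
Variable Omega : forall s, {linear M s -> M (rcons s true)}.
Variable Mho : forall s, {linear M (rcons s false) -> M s}.
Variable m : M [::].

Local Notation mu d n S := (mu_le Omega Mho d n (S (ray_vertex d n)) m).
Local Notation ker := (ker_Omega Omega).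
Local Notation im := (im_Mho Mho).
Local Notation whole := (whole M).
Local Notation zero := (zero_set M).

Lemma mu_le0 d (S : M [::] -> Prop) : mu_le Omega Mho d 0 S m <-> S m.
Proof. by split=> [[x [Sx <-]] | Sm] //; exists m. Qed.

Lemma mu_le_Omega_zero {d j} : d j = true -> mu d j.+1 zero <-> mu d j ker.
Proof.
(* Once the chain to [m] is abstracted, [case] on [d j] can retype the
   vertex [rcons (ray_vertex d j) (d j)]. *)
rewrite /mu_le /=; move: (chain _ _ d j) => C; case: (d j) => // _.
split=> [[_ [-> [y [/= y0 Cy]]]]|[y [y0 Cy]]].
  by exists y; split; rewrite // /ker_Omega y0.
by exists (Omega _ y); split; last by exists y.
Qed.

Lemma mu_le_Omega_whole {d j} : d j = true -> mu d j.+1 whole <-> mu d j whole.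
Proof.
rewrite /mu_le /=; move: (chain _ _ d j) => C; case: (d j) => // _.
split=> [[_ [_ [y [_ Cy]]]]|[y [_ Cy]]]; first by exists y.
by exists (Omega _ y); split; last by exists y.
Qed.

Lemma mu_le_Mho_zero {d j} : d j = false -> mu d j.+1 zero <-> mu d j zero.
Proof.
rewrite /mu_le /=; move: (chain _ _ d j) => C; case: (d j) => // _.
split=> [[_ [-> [y [/= -> Cy]]]]|[_ [-> C0]]].
  by exists (Mho _ 0); split; rewrite // /zero_set raddf0.
by exists 0; split; last by exists 0; rewrite /= raddf0.
Qed.

Lemma mu_le_Mho_whole {d j} : d j = false -> mu d j.+1 whole <-> mu d j im.
Proof.
rewrite /mu_le /=; move: (chain _ _ d j) => C; case: (d j) => // _.
split=> [[x [_ [_ [/= -> Cy]]]]|[_ [[x ->] Cy]]].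
  by exists (Mho _ x); split=> //; exists x.
by exists x; split=> //; exists (Mho _ x).
Qed.

Definition greedy_ray (d : nat -> bool) : Prop :=
  forall n, d n = false <-> mu d n im.

Definition lifts_to_homology (d : nat -> bool) : Prop := exists j, mu d j ker /\ ~ mu d j im.

Lemma greedy_ray_homology_zero d :
  greedy_ray d -> lifts_to_homology d -> exists j, mu d j zero.
Proof.
move=> greedy_d [j [ker_j not_im_j]]; exists j.+1.
have d_j : d j = true by case d_j: (d j) => //; move/greedy_d: d_j.
exact: (mu_le_Omega_zero d_j).2 ker_j.
Qed.

Lemma greedy_ray_nonzero d : greedy_ray d -> m != 0 -> ~ lifts_to_homology d ->
  forall j, mu d j whole /\ ~ mu d j zero.
Proof.
move=> greedy_d m_neq0 not_homology; elim=> [|j [whole_j not_zero_j]].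
  by rewrite !mu_le0; split=> // m0; rewrite m0 eqxx in m_neq0.
case d_j: (d j).
- split; first exact/(mu_le_Omega_whole d_j).
  move/(mu_le_Omega_zero d_j) => ker_j; apply: not_homology; exists j; split=> //.
  by move/greedy_d; rewrite d_j.
- split; first exact/(mu_le_Mho_whole d_j)/greedy_d.
  by move/(mu_le_Mho_zero d_j).
Qed.

(* The greedy symbol at step [n] depends on the chains along the first [n]
   symbols, so the ray is built by iterating on pairs of a vertex and the
   elements over it that are chain-connected to [m]. *)
Definition frontier := {s : seq bool & M s -> Prop}.

Definition greedy_dir (F : frontier) : bool :=
  if excluded_middle_informative (exists x, im (projT1 F) x /\ projT2 F x)
  then false else true.

Definition frontier_step (F : frontier) : frontier :=
  existT _ (rcons (projT1 F) (greedy_dir F))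
    (fun x => exists y, mu_tilde Omega Mho _ (greedy_dir F) x y /\ projT2 F y).

Lemma frontier_stepE F s (S : M s -> Prop) : F = existT _ s S ->
  frontier_step F = existT _ (rcons s (greedy_dir F))
    (fun x => exists y, mu_tilde Omega Mho s (greedy_dir F) x y /\ S y).
Proof. by move->. Qed.

Lemma greedy_ray_exists : exists d, greedy_ray d.
Proof.
pose F n := iter n frontier_step (existT _ [::] (eq^~ m)).
pose d n := greedy_dir (F n); exists d.
have FE n : F n = existT _ (ray_vertex d n) (fun x => chain Omega Mho d n x m).
  by elim: n => [|n IH] //; apply: frontier_stepE.
move=> n; rewrite /d /greedy_dir FE /=.
by case: excluded_middle_informative.
Qed.

End GreedyRay.

Arguments greedy_ray_homology_zero {R M Omega Mho m d}.
Arguments greedy_ray_nonzero {R M Omega Mho m d}.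
Arguments greedy_ray_exists {R M} Omega Mho m.
Arguments lifts_to_homology {R M} Omega Mho m d.

Theorem lemma5p12 (R : comPzRingType) (M : seq bool -> lmodType R)
  (Omega : forall s, {linear M s -> M (rcons s true)})
  (Mho : forall s, {linear M (rcons s false) -> M s})
  (hcomplex : forall (s : seq bool) (x : M (rcons s false)),
      Omega s (Mho s x) = 0)
  (m : M [::]) (hm : m != 0) :
  exists d : nat -> bool,
    let P1 := exists j : nat,
        mu_le Omega Mho d j (ker_Omega Omega (ray_vertex d j)) m /\
        ~ mu_le Omega Mho d j (im_Mho Mho (ray_vertex d j)) m in
    let P2 :=
        (forall j : nat,
          mu_le Omega Mho d j (whole M (ray_vertex d j)) m /\
          ~ mu_le Omega Mho d j (zero_set M (ray_vertex d j)) m) /\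
        ((forall i : nat, mu_le Omega Mho d i (whole M (ray_vertex d i)) m) /\
         ~ (exists i : nat, mu_le Omega Mho d i (zero_set M (ray_vertex d i)) m)) in
    (P1 /\ ~ P2) \/ (~ P1 /\ P2).
Proof.
have [d greedy_d] := greedy_ray_exists Omega Mho m.
exists d => /=.
have [homology_d | not_homology_d] := classic (lifts_to_homology Omega Mho m d).
  left; split=> // [[nonzero_d _]].
  have [j zero_j] := greedy_ray_homology_zero greedy_d homology_d.
  exact: (nonzero_d j).2 zero_j.
have nonzero_d := greedy_ray_nonzero greedy_d hm not_homology_d.
right; do 2!split=> //; split=> [i | [i zero_i]]; first exact: (nonzero_d i).1.
exact: (nonzero_d i).2 zero_i.
Qed.
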